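(* Let $\mathcal{C}$ be an additive category with an automorphism $\Sigma$, let $n\ge3$, and let $\mathscr{N}$ be a collection of $n$-$\Sigma$-sequences in $\mathcal{C}$ satisfying the axioms (N1* ) and (N3). Then $\mathscr{N}$ satisfies (N2) if and only if $\mathscr{N}$ satisfies (N2* ).
   Context: $\mathcal{C}$ is an additive category, $\Sigma\colon\mathcal{C}\to\mathcal{C}$ an automorphism, $n\ge3$. An $n$-$\Sigma$-sequence $A_\bullet$ is a diagram $A_1\xrightarrow{\alpha_1}A_2\to\cdots\xrightarrow{\alpha_{n-1}}A_n\xrightarrow{\alpha_n}\Sigma A_1$. It is exact if for every object $B$ the doubly infinite sequence of abelian groups $\cdots\to\mathrm{Hom}(B,\Sigma^iA_1)\xrightarrow{(\Sigma^i\alpha_1)_*}\mathrm{Hom}(B,\Sigma^iA_2)\to\cdots\xrightarrow{(\Sigma^i\alpha_n)_*}\mathrm{Hom}(B,\Sigma^{i+1}A_1)\to\cdots$ ($i\in\mathbb{Z}$) is exact. The left rotation of $A_\bullet$ is $A_2\xrightarrow{\alpha_2}\cdots\xrightarrow{\alpha_n}\Sigma A_1\xrightarrow{(-1)^n\Sigma\alpha_1}\Sigma A_2$. A morphism $(\varphi_1,\dots,\varphi_n)\colon A_\bullet\to B_\bullet$ consists of $\varphi_i\colon A_i\to B_i$ with $\varphi_{i+1}\alpha_i=\beta_i\varphi_i$ ($1\le i\le n-1$) and $\Sigma\varphi_1\circ\alpha_n=\beta_n\varphi_n$; it is a weak isomorphism if $\varphi_i$ and $\varphi_{i+1}$ are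 isomorphisms for some $1\le i\le n$ (with $\varphi_{n+1}:=\Sigma\varphi_1$). Axioms for a collection $\mathscr{N}$: (N1* ): (a) if $A_\bullet\to B_\bullet$ is a weak isomorphism of exact $n$-$\Sigma$-sequences with $A_\bullet\in\mathscr{N}$, then $B_\bullet\in\mathscr{N}$; (b) for all objects $A$, the trivial sequence $A\xrightarrow{1}A\to0\to\cdots\to0\to\Sigma A$ is in $\mathscr{N}$; (c) every morphism $\alpha\colon A_1\to A_2$ is the first morphism of some sequence in $\mathscr{N}$. (N2): an $n$-$\Sigma$-sequence is in $\mathscr{N}$ if and only if its left rotation is in $\mathscr{N}$. (N2* ): the left rotation of every sequence in $\mathscr{N}$ is in $\mathscr{N}$. (N3): given $A_\bullet,B_\bullet\in\mathscr{N}$ and $\varphi_1\colon A_1\to B_1$, $\varphi_2\colon A_2\to B_2$ with $\varphi_2\alpha_1=\beta_1\varphi_1$, there exist $\varphi_3,\dots,\varphi_n$ making $(\varphi_1,\dots,\varphi_n)$ a morphism of $n$-$\Sigma$-sequences. *)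

From HB Require Import structures.
From mathcomp Require Import all_boot all_order all_algebra.
Set Implicit Arguments. Unset Strict Implicit. Unset Printing Implicit Defensive.
Import GRing.Theory.
Local Open Scope ring_scope.

Definition castHom {T : Type} (H : T -> T -> Type) (A A' B B' : T)
  (e1 : A = A') (e2 : B = B') (f : H A B) : H A' B' :=
  match e1 in _ = A1 return H A1 B' with
  | erefl => match e2 in _ = B1 return H A B1 with erefl => f end end.

Record AddCat := {
  Obj :> Type;
  Hom : Obj -> Obj -> zmodType;
  comp : forall A B D : Obj, Hom B D -> Hom A B -> Hom A D;
  idm : forall A : Obj, Hom A A;
  compA : forall A B D E (h : Hom D E) (g : Hom B D) (f : Hom A B),
      comp h (comp g f) = comp (comp h g) f;
  comp1m : forall A B (f : Hom A B), comp (idm B) f = f;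
  compm1 : forall A B (f : Hom A B), comp f (idm A) = f;
  compDl : forall A B D (g g' : Hom B D) (f : Hom A B),
      comp (g + g') f = comp g f + comp g' f;
  compDr : forall A B D (g : Hom B D) (f f' : Hom A B),
      comp g (f + f') = comp g f + comp g f';
  zobj : Obj;
  zobj_id : idm zobj = 0;
  biprod : forall A B : Obj, exists (P : Obj) (i1 : Hom A P) (i2 : Hom B P)
      (p1 : Hom P A) (p2 : Hom P B),
      [/\ comp p1 i1 = idm A, comp p2 i2 = idm B, comp p1 i2 = 0,
          comp p2 i1 = 0 & comp i1 p1 + comp i2 p2 = idm P]
}.
Arguments Hom {_}.
Arguments comp {_ _ _ _}.
Arguments idm {_}.
Arguments zobj {_}.
Arguments castHom {T} H {A A' B B'}.
Definition HomT (C : AddCat) (X Y : C) : Type := Hom X Y.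
Arguments HomT : clear implicits.

Record Autom (C : AddCat) := {
  Sg : C -> C;
  Sgh : forall A B : C, Hom A B -> Hom (Sg A) (Sg B);
  Sgh_id : forall A : C, Sgh (idm A) = idm (Sg A);
  Sgh_comp : forall (A B D : C) (g : Hom B D) (f : Hom A B),
      Sgh (comp g f) = comp (Sgh g) (Sgh f);
  Sgh_add : forall (A B : C) (f g : Hom A B), Sgh (f + g) = Sgh f + Sgh g;
  Si : C -> C;
  Sih : forall A B : C, Hom A B -> Hom (Si A) (Si B);
  Sih_id : forall A : C, Sih (idm A) = idm (Si A);
  Sih_comp : forall (A B D : C) (g : Hom B D) (f : Hom A B),
      Sih (comp g f) = comp (Sih g) (Sih f);
  Sih_add : forall (A B : C) (f g : Hom A B), Sih (f + g) = Sih f + Sih g;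
  SiSg : forall X : C, Si (Sg X) = X;
  SgSi : forall X : C, Sg (Si X) = X;
  SihSgh : forall (A B : C) (f : Hom A B),
      castHom (HomT C) (SiSg A) (SiSg B) (Sih (Sgh f)) = f;
  SghSih : forall (A B : C) (f : Hom A B),
      castHom (HomT C) (SgSi A) (SgSi B) (Sgh (Sih f)) = f
}.
Arguments Sg {_}.
Arguments Sgh {_} _ {_ _}.
Arguments Si {_}.
Arguments Sih {_} _ {_ _}.

Section Seqs.
Variables (C : AddCat) (S : Autom C).

Fixpoint SpowN (m : nat) (A B : C) (f : Hom A B) : Hom (iter m (Sg S) A) (iter m (Sg S) B) :=
  match m return Hom (iter m (Sg S) A) (iter m (Sg S) B) with
  | 0 => f | m'.+1 => Sgh S (SpowN m' f) end.
Fixpoint SinvN (m : nat) (A B : C) (f : Hom A B) : Hom (iter m (Si S) A) (iter m (Si S) B) :=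
  match m return Hom (iter m (Si S) A) (iter m (Si S) B) with
  | 0 => f | m'.+1 => Sih S (SinvN m' f) end.

Definition Spow (i : int) (X : C) : C :=
  match i with Posz m => iter m (Sg S) X | Negz m => iter m.+1 (Si S) X end.

Definition Spow_hom (i : int) (A B : C) (f : Hom A B) : Hom (Spow i A) (Spow i B) :=
  match i as j return Hom (Spow j A) (Spow j B) with
  | Posz m => SpowN m f | Negz m => SinvN m.+1 f end.

Lemma Spow_S (i : int) (X : C) : Spow i (Sg S X) = Spow (i + 1) X.
Proof.
case: i => [m|m].
  have -> : (Posz m + 1 = Posz m.+1)%R by rewrite -addn1 PoszD.
  by rewrite /Spow -iterSr.
rewrite {1}/Spow iterSr SiSg; case: m => [|m] //.
have -> : (Negz m.+1 + 1 = Negz m)%R.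
  by rewrite !NegzE -addn1 PoszD opprD addrK.
by [].
Qed.

Variable n : nat.

(* An n-Sigma-sequence A_1 -> A_2 -> ... -> A_n -> Sigma A_1, 0-indexed:
   objects A_{k+1} = sob k for k : 'I_n, and the k-th morphism goes from
   sob k to sob (k+1) if k+1 < n, and from sob (n-1) to Sigma (sob 0)
   otherwise (ordS is the cyclic successor on 'I_n). *)
Definition tgt (ob : 'I_n -> C) (k : 'I_n) : C :=
  if (k.+1 < n)%N then ob (ordS k) else Sg S (ob (ordS k)).

Record nSeq := { sob : 'I_n -> C; smor : forall k : 'I_n, Hom (sob k) (tgt sob k) }.

(* exactness of Hom(B,X) -> Hom(B,Y) -> Hom(B,Z) for all objects B *)
Definition exact_at (X Y Z : C) (f : Hom X Y) (g : Hom Y Z) : Prop :=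
  (forall (B : C) (u : Hom B X), comp g (comp f u) = 0) /\
  (forall (B : C) (v : Hom B Y), comp g v = 0 -> exists u : Hom B X, comp f u = v).

(* the morphism following Sigma^i(alpha_{k+1}) in the doubly infinite sequence *)
Definition nextmap (A : nSeq) (i : int) (k : 'I_n) :
  Hom (Spow i (tgt (sob A) k))
      (Spow (if (k.+1 < n)%N then i else i + 1) (tgt (sob A) (ordS k))) :=
  match (k.+1 < n)%N as b return
    Hom (Spow i (if b then sob A (ordS k) else Sg S (sob A (ordS k))))
        (Spow (if b then i else i + 1) (tgt (sob A) (ordS k))) with
  | true => Spow_hom i (smor A (ordS k))
  | false => castHom (HomT C) (esym (Spow_S i (sob A (ordS k)))) erefl
               (Spow_hom (i + 1) (smor A (ordS k)))
  end.

(* A is exact iff the doubly infinite sequence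
   ... -> Hom(B, Sigma^i A_1) -> ... -> Hom(B, Sigma^i A_n) -> Hom(B, Sigma^{i+1} A_1) -> ...
   is exact for every object B. *)
Definition exact_seq (A : nSeq) : Prop :=
  forall (i : int) (k : 'I_n), exact_at (Spow_hom i (smor A k)) (nextmap A i k).

Definition rot_mor (A : nSeq) (j : 'I_n) :
  Hom (tgt (sob A) j) (tgt (tgt (sob A)) j) :=
  match (j.+1 < n)%N as b return
    Hom (if b then sob A (ordS j) else Sg S (sob A (ordS j)))
        (if b then tgt (sob A) (ordS j) else Sg S (tgt (sob A) (ordS j))) with
  | true => smor A (ordS j)
  | false => Sgh S (smor A (ordS j)) *~ ((-1) ^+ n)
  end.

Definition rot (A : nSeq) : nSeq := {| sob := tgt (sob A); smor := rot_mor A |}.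

Definition phiT (A B : nSeq) (phi : forall k, Hom (sob A k) (sob B k)) (k : 'I_n) :
  Hom (tgt (sob A) k) (tgt (sob B) k) :=
  match (k.+1 < n)%N as b return
    Hom (if b then sob A (ordS k) else Sg S (sob A (ordS k)))
        (if b then sob B (ordS k) else Sg S (sob B (ordS k))) with
  | true => phi (ordS k)
  | false => Sgh S (phi (ordS k))
  end.

Definition is_seqMor (A B : nSeq) (phi : forall k, Hom (sob A k) (sob B k)) : Prop :=
  forall k : 'I_n, comp (phiT phi k) (smor A k) = comp (smor B k) (phi k).

Definition is_iso (X Y : C) (f : Hom X Y) : Prop :=
  exists g : Hom Y X, comp g f = idm X /\ comp f g = idm Y.

(* phi_k and phi_{k+1} isomorphisms for some k (phi_{n+1} = Sigma phi_1) *)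
Definition weak_iso (A B : nSeq) (phi : forall k, Hom (sob A k) (sob B k)) : Prop :=
  exists k : 'I_n, is_iso (phi k) /\ is_iso (phiT phi k).

(* the trivial sequence X --1--> X -> 0 -> ... -> 0 -> Sigma X *)
Definition triv_ob (X : C) (j : 'I_n) : C := if ((j : nat) <= 1)%N then X else zobj.

Lemma triv_e1 (X : C) (k : 'I_n) : ((k : nat) == 0) && (1 < n)%N -> X = triv_ob X k.
Proof. by case/andP => /eqP h _; rewrite /triv_ob h. Qed.

Lemma triv_e2 (X : C) (k : 'I_n) : ((k : nat) == 0) && (1 < n)%N -> X = tgt (triv_ob X) k.
Proof.
case/andP => /eqP h h1; rewrite /tgt /triv_ob h h1 /=.
by rewrite h modn_small.
Qed.

Definition triv_mor (X : C) (k : 'I_n) : Hom (triv_ob X k) (tgt (triv_ob X) k) :=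
  match ((k : nat) == 0) && (1 < n)%N as b
    return (((k : nat) == 0) && (1 < n)%N = b -> Hom (triv_ob X k) (tgt (triv_ob X) k)) with
  | true => fun h => castHom (HomT C) (triv_e1 X h) (triv_e2 X h) (idm X)
  | false => fun _ => 0
  end erefl.

Definition triv (X : C) : nSeq := {| sob := triv_ob X; smor := triv_mor X |}.

Definition N1star (N : nSeq -> Prop) : Prop :=
  [/\ (forall (A B : nSeq) (phi : forall k, Hom (sob A k) (sob B k)),
          exact_seq A -> exact_seq B -> is_seqMor phi -> weak_iso phi -> N A -> N B),
      (forall X : C, N (triv X)) &
      (forall (A1 A2 : C) (alpha : Hom A1 A2), exists A : nSeq, N A /\
          exists (k0 : 'I_n) (e1 : sob A k0 = A1) (e2 : tgt (sob A) k0 = A2),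
            (k0 : nat) = 0 /\ castHom (HomT C) e1 e2 (smor A k0) = alpha)].

Definition N2 (N : nSeq -> Prop) : Prop := forall A : nSeq, N A <-> N (rot A).

Definition N2star (N : nSeq -> Prop) : Prop := forall A : nSeq, N A -> N (rot A).

(* given phi_1, phi_2 (the components at indices 0 and 1 of an arbitrary
   family phi) with phi_2 alpha_1 = beta_1 phi_1, there is a morphism of
   sequences extending them *)
Definition N3 (N : nSeq -> Prop) : Prop :=
  forall A B : nSeq, N A -> N B ->
  forall (k0 : 'I_n), (k0 : nat) = 0 ->
  forall phi : forall k, Hom (sob A k) (sob B k),
    comp (phiT phi k0) (smor A k0) = comp (smor B k0) (phi k0) ->
    exists psi : forall k, Hom (sob A k) (sob B k),
      [/\ is_seqMor psi, psi k0 = phi k0 & psi (ordS k0) = phi (ordS k0)].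

End Seqs.

From Pilot Require Import Defs.
From mathcomp Require Import all_boot all_order all_algebra.
From Stdlib Require Import ProofIrrelevance FunctionalExtensionality.
Set Implicit Arguments. Unset Strict Implicit. Unset Printing Implicit Defensive.
Import GRing.Theory.
Local Notation Hom := Defs.Hom.
Local Notation comp := Defs.comp.
Local Notation rot := Defs.rot.
Local Open Scope ring_scope.

(* Conversely, assume N2*.  Comparing a sequence of N
   with trivial sequences by N3 shows that every sequence of N is exact at its
   first two terms, hence, by rotation, exact.  Now let rot A be in N.
   Exactness of rot A gives exactness of A, and N1*(c) gives B in N with the
   same first morphism alpha_1 as A.  After n rotations, rot^n B and
   rot^n A = rot^(n-1) (rot A) are in N and both start with (-1)^n Sigma alpha_1,
   so N3 extends the identities to a weak isomorphism rot^n B -> rot^n A.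
   Since Sigma is an automorphism it un-rotates to a weak isomorphism B -> A,
   and N1*(a) puts A in N. *)

Section AdditiveCategory.
Variable C : AddCat.
Implicit Types A B D : C.

Lemma comp0m A B D (f : Hom A B) : comp (0 : Hom B D) f = 0.
Proof. by apply: (addrI (comp 0 f)); rewrite -compDl !addr0. Qed.

Lemma compm0 A B D (g : Hom B D) : comp g (0 : Hom A B) = 0.
Proof. by apply: (addrI (comp g 0)); rewrite -compDr !addr0. Qed.

Lemma compNm A B D (g : Hom B D) (f : Hom A B) : comp (- g) f = - comp g f.
Proof. by apply/eqP; rewrite -subr_eq0 opprK -compDl addNr comp0m. Qed.

Lemma compmN A B D (g : Hom B D) (f : Hom A B) : comp g (- f) = - comp g f.
Proof. by apply/eqP; rewrite -subr_eq0 opprK -compDr addNr compm0. Qed.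

Lemma signz_cases (m : nat) : (-1) ^+ m = 1 :> int \/ (-1) ^+ m = -1 :> int.
Proof. by rewrite -signr_odd; case: (odd m); [right | left]. Qed.

Lemma compzm A B D (g : Hom B D) (f : Hom A B) m :
  comp (g *~ (-1) ^+ m) f = comp g f *~ (-1) ^+ m.
Proof. by case: (signz_cases m) => ->; rewrite ?mulr1z ?mulrN1z ?compNm. Qed.

Lemma compmz A B D (g : Hom B D) (f : Hom A B) m :
  comp g (f *~ (-1) ^+ m) = comp g f *~ (-1) ^+ m.
Proof. by case: (signz_cases m) => ->; rewrite ?mulr1z ?mulrN1z ?compmN. Qed.

Lemma mulrz_sign_inj A B m : injective (fun f : Hom A B => f *~ (-1) ^+ m).
Proof.
by case: (signz_cases m) => -> f g /=; rewrite ?mulr1z ?mulrN1z //; apply: oppr_inj.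
Qed.

Lemma castHom_id A B (e1 : A = A) (e2 : B = B) (f : Hom A B) :
  castHom (HomT C) e1 e2 f = f.
Proof. by rewrite (proof_irrelevance _ e1 erefl) (proof_irrelevance _ e2 erefl). Qed.

Lemma castHom_irr A A' B B' (e1 e1' : A = A') (e2 e2' : B = B') (f : Hom A B) :
  castHom (HomT C) e1 e2 f = castHom (HomT C) e1' e2' f.
Proof. by rewrite (proof_irrelevance _ e1 e1') (proof_irrelevance _ e2 e2'). Qed.

Lemma castHom_trans A A' A'' B B' B'' (e1 : A = A') (e2 : B = B') (e3 : A' = A'')
    (e4 : B' = B'') (f : Hom A B) :
  castHom (HomT C) e3 e4 (castHom (HomT C) e1 e2 f)
  = castHom (HomT C) (etrans e1 e3) (etrans e2 e4) f.
Proof. by case: A'' / e3; case: B'' / e4; case: A' / e1; case: B' / e2. Qed.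

Lemma castHom_comp A A' B B' D D' (e1 : A = A') (e2 : B = B') (e3 : D = D')
    (g : Hom B D) (f : Hom A B) :
  castHom (HomT C) e1 e3 (comp g f)
  = comp (castHom (HomT C) e2 e3 g) (castHom (HomT C) e1 e2 f).
Proof. by case: A' / e1; case: B' / e2; case: D' / e3. Qed.

Lemma castHom_compl A B B' D D' (e1 : B = B') (e2 : D = D') (g : Hom B D) (f : Hom A B') :
  comp (castHom (HomT C) e1 e2 g) f
  = castHom (HomT C) erefl e2 (comp g (castHom (HomT C) erefl (esym e1) f)).
Proof. by case: B' / e1 f; case: D' / e2. Qed.

Lemma castHom0 A A' B B' (e1 : A = A') (e2 : B = B') :
  castHom (HomT C) e1 e2 (0 : Hom A B) = 0.
Proof. by case: A' / e1; case: B' / e2. Qed.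

Lemma castHomMz A A' B B' (e1 : A = A') (e2 : B = B') (f : Hom A B) m :
  castHom (HomT C) e1 e2 (f *~ m) = castHom (HomT C) e1 e2 f *~ m.
Proof. by case: A' / e1; case: B' / e2. Qed.

Lemma is_iso_castHom_idm A B B' (e1 : A = B) (e2 : A = B') :
  is_iso (castHom (HomT C) e1 e2 (idm A)).
Proof. by case: B / e1; case: B' / e2; exists (idm A); rewrite comp1m. Qed.

Lemma exact_at_castHom A A' B B' D D' (e1 : A = A') (e2 : B = B') (e3 : D = D')
    (f : Hom A B) (g : Hom B D) :
  exact_at f g -> exact_at (castHom (HomT C) e1 e2 f) (castHom (HomT C) e2 e3 g).
Proof. by case: A' / e1; case: B' / e2; case: D' / e3. Qed.

Lemma exact_atNr A B D (f : Hom A B) (g : Hom B D) : exact_at f (- g) -> exact_at f g.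
Proof.
case=> zero_comp lift; split=> [B0 u | B0 v gv0].
  by apply: oppr_inj; rewrite -compNm zero_comp oppr0.
by apply: lift; rewrite compNm gv0 oppr0.
Qed.

Lemma exact_atNl A B D (f : Hom A B) (g : Hom B D) : exact_at (- f) g -> exact_at f g.
Proof.
case=> zero_comp lift; split=> [B0 u | B0 v /lift [u fu]].
  by apply: oppr_inj; rewrite -compmN -compNm zero_comp oppr0.
by exists (- u); rewrite compmN -compNm.
Qed.

Lemma exact_at_unsignr A B D (f : Hom A B) (g : Hom B D) m :
  exact_at f (g *~ (-1) ^+ m) -> exact_at f g.
Proof. by case: (signz_cases m) => ->; rewrite ?mulr1z ?mulrN1z // => /exact_atNr. Qed.

Lemma exact_at_unsignl A B D (f : Hom A B) (g : Hom B D) m :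
  exact_at (f *~ (-1) ^+ m) g -> exact_at f g.
Proof. by case: (signz_cases m) => ->; rewrite ?mulr1z ?mulrN1z // => /exact_atNl. Qed.

End AdditiveCategory.

Section Automorphism.
Variables (C : AddCat) (S : Autom C).
Implicit Types A B D : C.

Lemma Sgh0 A B : Sgh S (0 : Hom A B) = 0.
Proof. by apply: (addrI (Sgh S 0)); rewrite -Sgh_add !addr0. Qed.

Lemma Sih0 A B : Sih S (0 : Hom A B) = 0.
Proof. by apply: (addrI (Sih S 0)); rewrite -Sih_add !addr0. Qed.

Lemma Sgh_castHom A A' B B' (e1 : A = A') (e2 : B = B') e1' e2' (f : Hom A B) :
  Sgh S (castHom (HomT C) e1 e2 f) = castHom (HomT C) e1' e2' (Sgh S f).
Proof.
by move: e1' e2'; case: A' / e1; case: B' / e2 => e1' e2'; rewrite [RHS]castHom_id.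
Qed.

Lemma Sih_castHom A A' B B' (e1 : A = A') (e2 : B = B') e1' e2' (f : Hom A B) :
  Sih S (castHom (HomT C) e1 e2 f) = castHom (HomT C) e1' e2' (Sih S f).
Proof.
by move: e1' e2'; case: A' / e1; case: B' / e2 => e1' e2'; rewrite [RHS]castHom_id.
Qed.

Lemma Sgh_inj A B : injective (@Sgh C S A B).
Proof. by move=> f g Sfg; rewrite -(SihSgh S f) -(SihSgh S g) Sfg. Qed.

Definition desusp A B (g : Hom (Sg S A) (Sg S B)) : Hom A B :=
  castHom (HomT C) (SiSg S A) (SiSg S B) (Sih S g).

Lemma desuspK A B (g : Hom (Sg S A) (Sg S B)) : Sgh S (desusp g) = g.
Proof.
rewrite /desusp (Sgh_castHom _ _ (SgSi S (Sg S A)) (SgSi S (Sg S B))).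
exact: SghSih.
Qed.

Lemma is_iso_Sgh_rev A B (f : Hom A B) : is_iso (Sgh S f) -> is_iso f.
Proof.
case=> g [gf fg]; exists (desusp g); split; apply: Sgh_inj.
  by rewrite Sgh_comp desuspK gf Sgh_id.
by rewrite Sgh_comp desuspK fg Sgh_id.
Qed.

Lemma exact_at_Sgh A B D (f : Hom A B) (g : Hom B D) :
  exact_at f g -> exact_at (Sgh S f) (Sgh S g).
Proof.
case=> zero_comp lift; split=> [B0 u | B0 v Sgv0].
  have gf0 : comp g f = 0 by rewrite -[f]compm1 zero_comp.
  by rewrite Defs.compA -Sgh_comp gf0 Sgh0 comp0m.
pose v' := castHom (HomT C) erefl (SiSg S B) (Sih S v).
have gv'0 : comp g v' = 0.
  rewrite -(SihSgh S g) /v' -castHom_comp -Sih_comp Sgv0 Sih0.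
  exact: castHom0.
have [u' fu'] := lift _ v' gv'0.
exists (castHom (HomT C) (SgSi S B0) erefl (Sgh S u')).
rewrite -[Sgh S f](castHom_id erefl erefl) -castHom_comp -Sgh_comp fu' /v'.
rewrite (Sgh_castHom _ _ erefl (SgSi S (Sg S B))) castHom_trans.
by rewrite -[RHS](SghSih S v); apply: castHom_irr.
Qed.

End Automorphism.

Definition Autom_inv (C : AddCat) (S : Autom C) : Autom C :=
  {| Sg := Si S; Sgh := @Sih C S; Sgh_id := @Sih_id C S; Sgh_comp := @Sih_comp C S;
     Sgh_add := @Sih_add C S; Si := Sg S; Sih := @Sgh C S; Sih_id := @Sgh_id C S;
     Sih_comp := @Sgh_comp C S; Sih_add := @Sgh_add C S; SiSg := @SgSi C S;
     SgSi := @SiSg C S; SihSgh := @SghSih C S; SghSih := @SihSgh C S |}.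

Lemma exact_at_Sih (C : AddCat) (S : Autom C) (A B D : C) (f : Hom A B) (g : Hom B D) :
  exact_at f g -> exact_at (Sih S f) (Sih S g).
Proof. exact: (@exact_at_Sgh C (Autom_inv S)). Qed.

Lemma exact_at_Sgh_rev (C : AddCat) (S : Autom C) (A B D : C) (f : Hom A B) (g : Hom B D) :
  exact_at (Sgh S f) (Sgh S g) -> exact_at f g.
Proof.
move=> /exact_at_Sih /(exact_at_castHom (SiSg S A) (SiSg S B) (SiSg S D)).
by rewrite !SihSgh.
Qed.

Section Powers.
Variables (C : AddCat) (S : Autom C).
Implicit Types A B D : C.

Lemma SpowN_Sgh (m : nat) A B (f : Hom A B) e1 e2 :
  SpowN S m.+1 f = castHom (HomT C) e1 e2 (SpowN S m (Sgh S f)).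
Proof.
elim: m e1 e2 => [|m IHm] e1 e2; first by rewrite /= castHom_id.
have e1' : iter m (Sg S) (Sg S A) = iter m.+1 (Sg S) A by rewrite iterSr.
have e2' : iter m (Sg S) (Sg S B) = iter m.+1 (Sg S) B by rewrite iterSr.
transitivity (Sgh S (SpowN S m.+1 f)); first by [].
by rewrite (IHm e1' e2') (Sgh_castHom _ _ e1 e2).
Qed.

Lemma SinvN_Sgh (m : nat) A B (f : Hom A B) e1 e2 :
  SinvN S m f = castHom (HomT C) e1 e2 (SinvN S m.+1 (Sgh S f)).
Proof.
elim: m e1 e2 => [|m IHm] e1 e2.
  by rewrite /= -[LHS](SihSgh S f); apply: castHom_irr.
have e1' : iter m.+1 (Si S) (Sg S A) = iter m (Si S) A by rewrite iterSr SiSg.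
have e2' : iter m.+1 (Si S) (Sg S B) = iter m (Si S) B by rewrite iterSr SiSg.
transitivity (Sih S (SinvN S m f)); first by [].
by rewrite (IHm e1' e2') (Sih_castHom _ _ e1 e2).
Qed.

Lemma Spow_homS (i j : int) (ij : j = i + 1) A B (f : Hom A B)
    (e1 : Spow S i (Sg S A) = Spow S j A) (e2 : Spow S i (Sg S B) = Spow S j B) :
  Spow_hom S j f = castHom (HomT C) e1 e2 (Spow_hom S i (Sgh S f)).
Proof.
case: i ij e1 e2 => [m|[|m]] ij.
- have -> : j = Posz m.+1 by rewrite ij -addn1 PoszD.
  exact: SpowN_Sgh.
- have -> : j = Posz 0 by rewrite ij.
  exact: (SinvN_Sgh (m := 0)).
- have -> : j = Negz m by rewrite ij !NegzE -addn1 PoszD opprD addrK.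
  exact: (SinvN_Sgh (m := m.+1)).
Qed.

Lemma Spow_hom1 A B (f : Hom A B) :
  castHom (HomT C) (esym (Spow_S S 0 A)) erefl (Spow_hom S (0 + 1) f) = Sgh S f.
Proof.
rewrite (Spow_homS (j := 0 + 1) erefl f (Spow_S S 0 _) (Spow_S S 0 _)) castHom_trans.
exact: castHom_id.
Qed.

Lemma exact_at_Spow i A B D (f : Hom A B) (g : Hom B D) :
  exact_at f g -> exact_at (Spow_hom S i f) (Spow_hom S i g).
Proof.
move=> fg; case: i => [m|m] /=.
  by elim: m => [|m IHm] //=; apply: exact_at_Sgh.
by elim: m => [|m IHm] /=; apply: exact_at_Sih.
Qed.

End Powers.

Lemma iter_ordS_val (n m : nat) (j : 'I_n) : (iter m (@ordS n) j : nat) = ((j + m) %% n)%N.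
Proof.
elim: m => [|m IHm] /=; first by rewrite addn0 modn_small.
by rewrite IHm -addn1 modnDml -addnA addn1 addnS.
Qed.

Lemma iter_ordS_n (n : nat) (j : 'I_n) : iter n (@ordS n) j = j.
Proof. by apply: val_inj; rewrite /= iter_ordS_val modnDr modn_small. Qed.

Section Sequences.
Variables (C : AddCat) (S : Autom C) (n : nat).
Local Notation nSeq := (nSeq S n).
Local Notation tgt := (tgt S).
Local Notation rotS := (@rot C S n).

(* the shift i = 0 of the k-th condition of exact_seq; the other shifts follow
   by applying Sigma^i *)
Definition exact0 (A : nSeq) (k : 'I_n) := exact_at (smor A k) (nextmap A 0 k).

Lemma nextmap_Spow (A : nSeq) (i : int) (k : 'I_n) :
  exists E, nextmap A i k = castHom (HomT C) erefl E (Spow_hom S i (nextmap A 0 k)).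
Proof.
rewrite /nextmap /Defs.tgt; move: (smor A (ordS k)); case: (k.+1 < n)%N => a.
  by exists erefl.
exists (Spow_S S i _); rewrite Spow_hom1.
rewrite (Spow_homS (j := i + 1) erefl a (Spow_S S i _) (Spow_S S i _)).
by rewrite !castHom_trans; apply: castHom_irr.
Qed.

Lemma exact0_exact_seq (A : nSeq) : (forall k, exact0 A k) -> exact_seq A.
Proof.
move=> exA i k; have [E ->] := nextmap_Spow A i k.
rewrite -[Spow_hom S i (smor A k)](castHom_id erefl erefl).
exact/exact_at_castHom/exact_at_Spow/exA.
Qed.

(* at the last position nextmap and rot_mor differ only by the sign (-1)^n *)
Lemma exact_at_rot_mor (A : nSeq) (j : 'I_n) (X : C) (f : Hom X (tgt (sob A) j)) :
  exact_at f (rot_mor A j) -> exact_at f (nextmap A 0 j).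
Proof.
move: f; rewrite /rot_mor /nextmap; move: (smor A (ordS j)); rewrite /Defs.tgt.
case: (j.+1 < n)%N => f a //.
by rewrite Spow_hom1 => /exact_at_unsignr.
Qed.

Lemma exact0_rot (A : nSeq) (k : 'I_n) : exact0 (rot A) k -> exact0 A (ordS k).
Proof.
move=> exrot; apply: exact_at_rot_mor; move: exrot.
change (exact_at (rot_mor A k) (nextmap (rot A) 0 k) ->
  exact_at (smor A (ordS k)) (smor (rot A) (ordS k))).
rewrite /nextmap /rot_mor /=.
move: (smor A (ordS k)) (smor (rot A) (ordS k)); rewrite /= /Defs.tgt.
case: (k.+1 < n)%N => a b //.
by rewrite Spow_hom1 => /exact_at_unsignl /exact_at_Sgh_rev.
Qed.

Lemma exact_seq_rot (A : nSeq) : exact_seq (rot A) -> exact_seq A.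
Proof.
move=> exrot; apply: exact0_exact_seq => k; rewrite -(ord_predK k).
exact: exact0_rot (exrot 0 _).
Qed.

(* the inverse of the passage phi_{k+1} |-> phiT phi k *)
Definition untgt (A B : nSeq) (p : 'I_n) (f : Hom (tgt (sob A) p) (tgt (sob B) p)) :
  Hom (sob A (ordS p)) (sob B (ordS p)) :=
  match (p.+1 < n)%N as b return
    Hom (if b then sob A (ordS p) else Sg S (sob A (ordS p)))
        (if b then sob B (ordS p) else Sg S (sob B (ordS p))) ->
    Hom (sob A (ordS p)) (sob B (ordS p)) with
  | true => fun f => f
  | false => fun f => desusp f
  end f.

Lemma phiT_untgt (A B : nSeq) (phi : forall k, Hom (sob A k) (sob B k)) p f :
  phi (ordS p) = untgt f -> phiT phi p = f.
Proof.
rewrite /phiT => ->; rewrite /untgt; move: f; rewrite /= /Defs.tgt.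
by case: (p.+1 < n)%N => f //=; apply: desuspK.
Qed.

Definition unrot_fam (A B : nSeq) (P : forall k, Hom (sob (rot A) k) (sob (rot B) k)) :
  forall k, Hom (sob A k) (sob B k) :=
  fun k => castHom (HomT C) (congr1 (sob A) (ord_predK k)) (congr1 (sob B) (ord_predK k))
                   (untgt (P (ord_pred k))).

Lemma unrot_famS (A B : nSeq) P p : @unrot_fam A B P (ordS p) = untgt (P p).
Proof.
rewrite /unrot_fam.
move: (ord_pred (ordS p)) (ordSK p) (ord_predK (ordS p)) => q e; case: p / e => e'.
exact: castHom_id.
Qed.

Lemma phiT_unrot_fam (A B : nSeq) P : phiT (@unrot_fam A B P) = P.
Proof.
apply: functional_extensionality_dep => p.
by apply: phiT_untgt; rewrite unrot_famS.
Qed.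

Lemma is_seqMor_unrot (A B : nSeq) (phi : forall k, Hom (sob A k) (sob B k)) :
  is_seqMor (A := rot A) (B := rot B) (phiT phi) -> is_seqMor phi.
Proof.
move=> mor k; rewrite -(ord_predK k); move: (mor (ord_pred k)) => {mor}.
move: (ord_pred k) => p.
rewrite [phiT (A:=rot A) (B:=rot B) (phiT phi) p]/phiT [phiT phi p]/phiT /=.
rewrite [rot_mor A p]/rot_mor [rot_mor B p]/rot_mor.
move: (phiT phi (ordS p)) (smor A (ordS p)) (smor B (ordS p)) (phi (ordS p)).
rewrite /Defs.tgt; case: (p.+1 < n)%N => x a b y //=.
by rewrite compmz compzm -!Sgh_comp => /mulrz_sign_inj /Sgh_inj.
Qed.

Lemma is_seqMor_unrot_fam (A B : nSeq) (P : forall k, Hom (sob (rot A) k) (sob (rot B) k)) :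
  is_seqMor P -> is_seqMor (unrot_fam P).
Proof. by rewrite -{1}(phiT_unrot_fam P); apply: is_seqMor_unrot. Qed.

Lemma weak_iso_unrot (A B : nSeq) (phi : forall k, Hom (sob A k) (sob B k)) :
  weak_iso (A := rot A) (B := rot B) (phiT phi) -> weak_iso phi.
Proof.
case=> p isos; exists (ordS p); move: isos.
rewrite [phiT (A:=rot A) (B:=rot B) (phiT phi) p]/phiT [phiT phi p]/phiT /=.
move: (phiT phi (ordS p)) (phi (ordS p)).
rewrite /Defs.tgt; case: (p.+1 < n)%N => x y //=.
by case=> /is_iso_Sgh_rev x_iso /is_iso_Sgh_rev y_iso.
Qed.

Lemma weak_iso_unrot_iter (m : nat) (A B : nSeq)
    (P : forall k, Hom (sob (iter m rotS A) k) (sob (iter m rotS B) k)) :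
  is_seqMor P -> weak_iso P ->
  exists phi : forall k, Hom (sob A k) (sob B k), is_seqMor phi /\ weak_iso phi.
Proof.
elim: m A B P => [|m IHm] A B P; first by exists P.
rewrite -(phiT_unrot_fam P) => /is_seqMor_unrot mor /weak_iso_unrot wiso.
exact: IHm mor wiso.
Qed.

Definition agree_at (A B : nSeq) (j : 'I_n) :=
  exists (e1 : sob A j = sob B j) (e2 : tgt (sob A) j = tgt (sob B) j),
    castHom (HomT C) e1 e2 (smor A j) = smor B j.

Lemma agree_at_rot (A B : nSeq) j : agree_at A B (ordS j) -> agree_at (rot A) (rot B) j.
Proof.
case=> e1 [e2 AB]; rewrite /agree_at /= /rot_mor.
move: (smor A (ordS j)) (smor B (ordS j)) AB; rewrite /Defs.tgt.
case: (j.+1 < n)%N => a b AB; first by exists e1, e2.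
exists (congr1 (Sg S) e1), (congr1 (Sg S) e2).
by rewrite castHomMz -(Sgh_castHom e1 e2) AB.
Qed.

Lemma agree_at_iter (m : nat) (A B : nSeq) j :
  agree_at A B (iter m (@ordS n) j) -> agree_at (iter m rotS A) (iter m rotS B) j.
Proof.
elim: m j => [|m IHm] j //= AB.
by apply/agree_at_rot/IHm; rewrite -iterSr.
Qed.

(* components f0 at k0 and f1 at k0 + 1; the others, irrelevant for N3, are 0 *)
Definition fam_of_pair (A B : nSeq) (k0 : 'I_n) (f0 : Hom (sob A k0) (sob B k0))
  (f1 : Hom (sob A (ordS k0)) (sob B (ordS k0))) : forall k, Hom (sob A k) (sob B k) :=
  fun k => match k0 =P k with
  | ReflectT e => castHom (HomT C) (congr1 (sob A) e) (congr1 (sob B) e) f0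
  | ReflectF _ => match ordS k0 =P k with
     | ReflectT e => castHom (HomT C) (congr1 (sob A) e) (congr1 (sob B) e) f1
     | ReflectF _ => 0 end end.

Lemma fam_of_pair0 A B k0 f0 f1 : @fam_of_pair A B k0 f0 f1 k0 = f0.
Proof. by rewrite /fam_of_pair; case: eqP => // e; apply: castHom_id. Qed.

Lemma fam_of_pair1 A B k0 f0 f1 :
  k0 != ordS k0 -> @fam_of_pair A B k0 f0 f1 (ordS k0) = f1.
Proof.
move=> /negP k0_neq; rewrite /fam_of_pair; case: eqP => [e|_].
  by case: k0_neq; apply/eqP.
by case: eqP => // e; apply: castHom_id.
Qed.

End Sequences.

Section ClassN.
Variables (C : AddCat) (S : Autom C) (m : nat).
Local Notation n := m.+2.
Local Notation nSeq := (nSeq S n).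
Local Notation tgt := (tgt S).
Local Notation rotS := (@rot C S n).
Local Notation k0 := (ord0 : 'I_n).
Variable N : nSeq -> Prop.
Hypotheses (HN1 : N1star N) (HN3 : N3 N).

Lemma triv_mor0 (Y : C) : triv_mor S Y k0 = idm Y.
Proof. exact: castHom_id. Qed.

(* N3 applied to the trivial sequence of A_1, with phi_1 = 1 and phi_2 = alpha_1 *)
Lemma N_rot_mor_comp0 (X : nSeq) : N X -> comp (rot_mor X k0) (smor X k0) = 0.
Proof.
move=> NX; have [_ N_triv _] := HN1.
pose Y := sob X k0.
pose alpha : Hom (tgt (triv_ob Y) k0) (tgt (sob X) k0) := smor X k0.
pose phi := fam_of_pair (A := triv S n Y) (B := X) (k0 := k0) (idm Y)
  (untgt (A := triv S n Y) (B := X) alpha).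
have phi1 : phi (ordS k0) = untgt (A := triv S n Y) (B := X) alpha.
  by rewrite /phi fam_of_pair1.
have sq : comp (phiT phi k0) (smor (triv S n Y) k0) = comp (smor X k0) (phi k0).
  by rewrite (phiT_untgt phi1) /phi fam_of_pair0 /= triv_mor0 !compm1.
have [psi [psi_mor _ psi1]] := HN3 (N_triv Y) NX (erefl : (k0 : nat) = 0) sq.
have := psi_mor (ordS k0).
by rewrite /= psi1 phi1 compm0; apply: esym.
Qed.

Hypothesis HN2 : N2star N.

(* N3 applied to the rotated trivial sequence of B, with phi_1 = v and phi_2 = 0 *)
Lemma N_rot_mor_lift (X : nSeq) (B : C) (v : Hom B (tgt (sob X) k0)) :
  N X -> comp (rot_mor X k0) v = 0 -> exists u : Hom B (sob X k0), comp (smor X k0) u = v.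
Proof.
move=> NX v0; have [_ N_triv _] := HN1.
pose zero : Hom (tgt (sob (rot (triv S n B))) k0) (tgt (sob (rot X)) k0) := 0.
pose phi := fam_of_pair (A := rot (triv S n B)) (B := rot X) (k0 := k0) v (untgt zero).
have phi1 : phi (ordS k0) = untgt zero by rewrite /phi fam_of_pair1.
have sq : comp (phiT phi k0) (smor (rot (triv S n B)) k0) = comp (smor (rot X) k0) (phi k0).
  by rewrite (phiT_untgt phi1) comp0m /phi fam_of_pair0 /= v0.
have [psi [psi_mor psi0 _]] := HN3 (HN2 (N_triv B)) (HN2 NX) (erefl : (k0 : nat) = 0) sq.
exists (unrot_fam psi k0).
move: (is_seqMor_unrot_fam psi_mor k0).
by rewrite phiT_unrot_fam psi0 /phi fam_of_pair0 /= triv_mor0 compm1.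
Qed.

Lemma N_exact0_ord0 (X : nSeq) : N X -> exact0 X k0.
Proof.
move=> NX; apply: exact_at_rot_mor; split=> [B u | B v /(N_rot_mor_lift NX)] //.
by rewrite Defs.compA N_rot_mor_comp0 // comp0m.
Qed.

Lemma N_exact (X : nSeq) : N X -> exact_seq X.
Proof.
move=> NX; apply: exact0_exact_seq => k.
have -> : k = iter k (@ordS n) k0.
  by apply: val_inj; rewrite /= iter_ordS_val add0n modn_small.
elim: (k : nat) X NX => [|j IHj] X NX; first exact: N_exact0_ord0.
exact/exact0_rot/IHj/HN2.
Qed.

Lemma N_iter_rot j (X : nSeq) : N X -> N (iter j rotS X).
Proof. by elim: j => [|j IHj] //= /IHj /HN2. Qed.

(* N3 extends the identities given by the common first morphism *)
Lemma agree_at0_weak_iso (A B : nSeq) : N A -> N B -> agree_at A B k0 ->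
  exists phi : forall k, Hom (sob A k) (sob B k), is_seqMor phi /\ weak_iso phi.
Proof.
move=> NA NB [e1 [e2 AB]].
pose g0 : Hom (sob A k0) (sob B k0) := castHom (HomT C) erefl e1 (idm _).
pose g1 : Hom (tgt (sob A) k0) (tgt (sob B) k0) := castHom (HomT C) erefl e2 (idm _).
pose phi := fam_of_pair (k0 := k0) g0 (untgt g1).
have phi1 : phi (ordS k0) = untgt g1 by rewrite /phi fam_of_pair1.
have sq : comp (phiT phi k0) (smor A k0) = comp (smor B k0) (phi k0).
  rewrite (phiT_untgt phi1) /phi fam_of_pair0 /g0 /g1 -AB.
  by rewrite !castHom_compl castHom_trans !castHom_id comp1m compm1.
have [psi [psi_mor psi0 psi1]] := HN3 NA NB (erefl : (k0 : nat) = 0) sq.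
have psiT : phiT psi k0 = g1 by apply: phiT_untgt; rewrite psi1.
exists psi; split=> //; exists k0.
rewrite psiT psi0 /phi fam_of_pair0.
by split; apply: is_iso_castHom_idm.
Qed.

Lemma N_of_N_rot (A : nSeq) : N (rot A) -> N A.
Proof.
move=> Nrot; have [N_weak_iso _ N_mor0] := HN1.
have [B [NB [j [e1 [e2 [j0 BA]]]]]] := N_mor0 _ _ (smor A k0).
have jk0 : j = k0 by apply: val_inj.
subst j.
have agr : agree_at B A (iter n (@ordS n) k0) by rewrite iter_ordS_n; exists e1, e2.
have NrotA : N (iter n rotS A) by rewrite iterSr; apply: N_iter_rot.
have [psi [psi_mor psi_wiso]] :=
  agree_at0_weak_iso (N_iter_rot n NB) NrotA (agree_at_iter agr).
have [phi [phi_mor phi_wiso]] := weak_iso_unrot_iter psi_mor psi_wiso.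
exact: N_weak_iso phi (N_exact NB) (exact_seq_rot (N_exact Nrot)) phi_mor phi_wiso NB.
Qed.

End ClassN.

Local Close Scope ring_scope.

Theorem theorem3p3 (C : AddCat) (S : Autom C) (n : nat) (N : nSeq S n -> Prop) :
  3 <= n -> N1star N -> N3 N -> (N2 N <-> N2star N).
Proof.
case: n N => [|[|[|n']]] N // _ HN1 HN3; split=> [HN2 A /HN2 // | HN2 A].
by split; [apply: HN2 | apply: N_of_N_rot].
Qed.
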